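(* Let $D$ be a diagram of a knot $K$, let $E=\{e_1,\dots,e_n\}$ be a generating set of seeds for $D$ with $n=\omega(D)$ elements, and let $H$ be a Coxeter group with Coxeter rank $r(H)=n$. Let $\mathcal{A}\subseteq\mathrm{Gen}(H)$ be a robust set. Then the following are equivalent. (i) There is a surjective homomorphism $\pi_1(S^3\setminus K)\twoheadrightarrow H$ sending meridians to reflections, equivalently an $H$-coloring of $D$ by reflections whose labels generate $H$. (ii) There exist $R=\{\rho_1,\dots,\rho_n\}\in\mathcal{A}$ and a bijection $f:E\to R$ such that labeling each seed $e_i$ by $f(e_i)$ extends to an $H$-coloring of $D$.
   Context: A Coxeter group is given by generators $s$ with $s^2=1$ and relations $(st)^{k}=1$ prescribed by a labeled graph. A reflection is any conjugate of a generator. The Coxeter rank $r(H)$ is the minimal number of reflections generating $H$. In a knot diagram $D$, at a crossing with overstrand $o$ and understrands $u_1,u_2$, a coloring move adds $u_2$ to a set of colored strands that already contains $o$ and $u_1$. A generating set of seeds is a set of strands from which coloring moves eventually color every strand. The Wirtinger number $\omega(D)$ is the minimal size of a generating set of seeds. An $H$-coloring of $D$ by reflections assigns a reflection $g_s\in H$ to each strand $s$ such that $g_o g_{u_1} g_o^{-1}=g_{u_2}$ at every crossing. $\mathrm{Gen}(H)$ denotes the set of generating sets of $H$ consisting of exactly $r(H)$ reflections. Two members $\{r_i\},\{\rho_i\}$ are equivalent if $\{g^{-1}r_ig\}=\{\rho_i\}$ for some $g\in H$. A subset $\mathcal{A}\subseteq\mathrm{Gen}(H)$ is robust if it meets every equivalence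 class. *)

From mathcomp Require Import all_boot.
Set Implicit Arguments. Unset Strict Implicit. Unset Printing Implicit Defensive.

Record group := Group {
  gcar :> Type;
  gmul : gcar -> gcar -> gcar;
  gone : gcar;
  ginv : gcar -> gcar;
  gmulA : forall x y z, gmul x (gmul y z) = gmul (gmul x y) z;
  gmul1l : forall x, gmul gone x = x;
  gmul1r : forall x, gmul x gone = x;
  gmulVl : forall x, gmul (ginv x) x = gone;
  gmulVr : forall x, gmul x (ginv x) = gone
}.

Fixpoint gpow (G : group) (x : G) (k : nat) : G :=
  match k with 0 => gone G | k'.+1 => gmul x (gpow x k') end.

Definition is_hom (G K : group) (phi : G -> K) : Prop :=
  forall x y, phi (gmul x y) = gmul (phi x) (phi y).

Inductive gen_by (G : group) (X : G -> Prop) : G -> Prop :=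
  | gen_one : gen_by X (gone G)
  | gen_elt x : X x -> gen_by X x
  | gen_mul x y : gen_by X x -> gen_by X y -> gen_by X (gmul x y)
  | gen_inv x : gen_by X x -> gen_by X (ginv x).

Definition generates (G : group) (X : G -> Prop) : Prop :=
  forall h : G, gen_by X h.

(* m i j = 0 encodes m_ij = infinity (no relation).                   *)
Definition coxeter_matrix (I : finType) (m : I -> I -> nat) : Prop :=
  (forall i, m i i = 1) /\ (forall i j, m i j = m j i) /\
  (forall i j, i != j -> m i j != 1).

Definition coxeter_relations (G : group) (I : finType) (m : I -> I -> nat)
  (t : I -> G) : Prop :=
  forall i j, m i j != 0 -> gpow (gmul (t i) (t j)) (m i j) = gone G.

(* (H, s) is the group presented by generators s_i and relations
   (s_i s_j)^{m_ij} = 1 (in particular s_i^2 = 1 since m_ii = 1):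
   the s_i generate H, satisfy the relations, and H has the universal
   property of the presentation. *)
Definition coxeter_system (H : group) (I : finType) (m : I -> I -> nat)
  (s : I -> H) : Prop :=
  [/\ generates (fun h => exists i, h = s i),
      coxeter_relations m s &
      forall (G : group) (t : I -> G), coxeter_relations m t ->
        exists phi : H -> G, is_hom phi /\ forall i, phi (s i) = t i].

Definition reflection (H : group) (I : finType) (s : I -> H) (x : H) : Prop :=
  exists (g : H) (i : I), x = gmul (gmul (ginv g) (s i)) g.

Definition has_card (H : group) (R : H -> Prop) (k : nat) : Prop :=
  exists f : 'I_k -> H, injective f /\ forall h, R h <-> exists j, f j = h.

Definition coxeter_rank (H : group) (I : finType) (s : I -> H) (n : nat) : Prop :=
  (exists f : 'I_n -> H, (forall j, reflection s (f j)) /\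
      generates (fun h => exists j, h = f j)) /\
  (forall k (f : 'I_k -> H), (forall j, reflection s (f j)) ->
      generates (fun h => exists j, h = f j) -> n <= k).

Definition in_Gen (H : group) (I : finType) (s : I -> H) (n : nat)
  (R : H -> Prop) : Prop :=
  [/\ forall h, R h -> reflection s h, has_card R n & generates R].

Definition gen_equiv (H : group) (R R' : H -> Prop) : Prop :=
  exists g : H, forall h, R' h <-> exists r, R r /\ h = gmul (gmul (ginv g) r) g.

Definition robust (H : group) (I : finType) (s : I -> H) (n : nat)
  (A : (H -> Prop) -> Prop) : Prop :=
  (forall R, A R -> in_Gen s n R) /\
  (forall R, in_Gen s n R -> exists R', A R' /\ gen_equiv R R').

Record diagram := Diagram {
  strand : finType;
  crossing : finType;
  over : crossing -> strand;
  under1 : crossing -> strand;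
  under2 : crossing -> strand
}.

(* strands colored from the seeds E by repeated coloring moves; the two
   understrands of a crossing play symmetric roles. *)
Inductive colored (D : diagram) (E : {set strand D}) : strand D -> Prop :=
  | col_seed x : x \in E -> colored E x
  | col_move12 c : colored E (over c) -> colored E (under1 c) ->
                   colored E (under2 c)
  | col_move21 c : colored E (over c) -> colored E (under2 c) ->
                   colored E (under1 c).

Definition generating_seeds (D : diagram) (E : {set strand D}) : Prop :=
  forall x, colored E x.

Definition wirtinger_number (D : diagram) (w : nat) : Prop :=
  (exists E : {set strand D}, generating_seeds E /\ #|E| = w) /\
  (forall E : {set strand D}, generating_seeds E -> w <= #|E|).

Definition refl_coloring (D : diagram) (H : group) (I : finType) (s : I -> H)
  (g : strand D -> H) : Prop :=
  (forall x, reflection s (g x)) /\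
  (forall c, gmul (gmul (g (over c)) (g (under1 c))) (ginv (g (over c)))
             = g (under2 c)).

(** The labels of the seeds determine a coloring, and they generate the whole
    image of the coloring since every coloring move conjugates one label by
    another.  So a surjective coloring yields #|E| = r(H) reflections generating
    H; by minimality of r(H) they are pairwise distinct and form a member of
    Gen(H).  Robustness provides an equivalent member of A, i.e. a conjugate of
    it, and conjugating the whole coloring by the same element gives (ii).
    Conversely a member of A generates H, so any coloring extending it is
    surjective. *)
From Pilot Require Import Defs.
From mathcomp Require Import all_boot.
Set Implicit Arguments. Unset Strict Implicit.

Section GroupFacts.
Variable H : group.
Implicit Types x y k : H.
Local Notation "x * y" := (gmul x y).
Local Notation "x ^-1" := (ginv x).

Lemma ginv_uniq x y : x * y = gone H -> y = x^-1.
Proof. by move=> xy1; rewrite -[y]gmul1l -(gmulVl x) -gmulA xy1 gmul1r. Qed.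

Lemma ginvK x : (x^-1)^-1 = x.
Proof. by symmetry; apply: ginv_uniq; rewrite gmulVl. Qed.

Lemma ginvM x y : (x * y)^-1 = y^-1 * x^-1.
Proof.
by symmetry; apply: ginv_uniq; rewrite gmulA -(gmulA x) gmulVr gmul1r gmulVr.
Qed.

Definition conjg k x : H := k^-1 * x * k.

Lemma conjgM k x y : conjg k (x * y) = conjg k x * conjg k y.
Proof.
rewrite /conjg -!gmulA; congr (_ * _).
by rewrite !gmulA -(gmulA _ k) gmulVr gmul1r.
Qed.

Lemma conjgV k x : conjg k x^-1 = (conjg k x)^-1.
Proof. by rewrite /conjg !ginvM ginvK gmulA. Qed.

Lemma conjgK k x : k * conjg k x * k^-1 = x.
Proof. by rewrite /conjg -!gmulA gmulVr gmul1r !gmulA gmulVr gmul1l. Qed.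

Lemma conjg_inj k : injective (conjg k).
Proof. by move=> x y exy; rewrite -(conjgK k x) exy conjgK. Qed.

Lemma gen_by_sub (X Y : H -> Prop) :
  (forall h, X h -> gen_by Y h) -> forall h, gen_by X h -> gen_by Y h.
Proof. by move=> XY h; elim=> [|x /XY|x y _ ? _ ?|x _ ?] //; constructor. Qed.

Lemma generates_sub (X Y : H -> Prop) :
  (forall h, X h -> gen_by Y h) -> generates X -> generates Y.
Proof. by move=> XY genX h; apply: gen_by_sub XY _ (genX h). Qed.

End GroupFacts.

Definition set_image (T : finType) (H : Type) (S : {set T}) (g : T -> H) :
  H -> Prop := fun h => exists2 x, x \in S & h = g x.

Lemma has_card_set_image (T : finType) (H : group) (S : {set T}) (g : T -> H) :
  {in S &, injective g} -> has_card (set_image S g) #|S|.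
Proof.
move=> ginj; exists (fun j => g (enum_val j)); split.
  by move=> i j /(ginj _ _ (enum_valP i) (enum_valP j)) /enum_val_inj.
move=> h; split=> [[x xS ->]|[j <-]]; last by exists (enum_val j); rewrite ?enum_valP.
by exists (enum_rank_in xS x); rewrite enum_rankK_in.
Qed.

Section Reflections.
Variables (H : group) (I : finType) (s : I -> H).

Lemma reflection_conjg k x : reflection s x -> reflection s (conjg k x).
Proof. by case=> a [i ->]; exists (gmul a k), i; rewrite /conjg ginvM !gmulA. Qed.

Lemma conjg_coloring (D : diagram) k (g : strand D -> H) :
  refl_coloring s g -> refl_coloring s (fun x => conjg k (g x)).
Proof.
case=> g_refl g_cross; split=> [x|c]; first exact: reflection_conjg.
by rewrite -conjgV -!conjgM g_cross.
Qed.

Lemma coxeter_rank_le_card n (T : finType) (S : {set T}) (g : T -> H) :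
  coxeter_rank s n -> {in S, forall x, reflection s (g x)} ->
  generates (set_image S g) -> n <= #|S|.
Proof.
case=> _ rank_min g_refl genS.
apply: (rank_min _ (fun j => g (enum_val j))) => [j|]; first exact: g_refl (enum_valP j).
apply: generates_sub genS => _ [x xS ->]; apply: gen_elt.
by exists (enum_rank_in xS x); rewrite enum_rankK_in.
Qed.

(* Identifying two elements of S would generate H with #|S| - 1 reflections. *)
Lemma coxeter_rank_injective (T : finType) (S : {set T}) (g : T -> H) :
  coxeter_rank s #|S| -> {in S, forall x, reflection s (g x)} ->
  generates (set_image S g) -> {in S &, injective g}.
Proof.
move=> rankS g_refl genS x y xS yS gxy; case: (eqVneq x y) => // neq_xy.
have : #|S| <= #|S :\ y|.
  apply: (coxeter_rank_le_card (g := g) rankS) => [z /setD1P[_ zS]|]; first exact: g_refl.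
  apply: generates_sub genS => _ [z zS ->]; apply: gen_elt.
  case: (eqVneq z y) => [->|neq_zy]; first by exists x; [rewrite !inE neq_xy|].
  by exists z; rewrite // !inE neq_zy.
by rewrite (cardsD1 y S) yS add1n ltnn.
Qed.

End Reflections.

Definition wirtinger_relations (D : diagram) (H : group) (g : strand D -> H) :
  Prop := forall c,
    gmul (gmul (g (Defs.over c)) (g (under1 c))) (ginv (g (Defs.over c)))
    = g (under2 c).

Lemma colored_gen_by (D : diagram) (E : {set strand D}) (H : group)
    (g : strand D -> H) :
  wirtinger_relations g -> forall x, colored E x -> gen_by (set_image E g) (g x).
Proof.
move=> g_cross x; elim=> [y yE|c _ gen_o _ gen_u|c _ gen_o _ gen_u].
- by apply: gen_elt; exists y.
- by rewrite -g_cross; do ![apply: gen_mul | apply: gen_inv].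
- have -> : g (under1 c) = conjg (g (Defs.over c)) (g (under2 c)).
    by rewrite -g_cross /conjg !gmulA gmulVl gmul1l -gmulA gmulVl gmul1r.
  by rewrite /conjg; do ![apply: gen_mul | apply: gen_inv].
Qed.

Lemma seed_labels_generate (D : diagram) (E : {set strand D}) (H : group)
    (g : strand D -> H) :
  generating_seeds E -> wirtinger_relations g ->
  generates (fun h => exists x, h = g x) -> generates (set_image E g).
Proof.
move=> seedsE g_cross; apply: generates_sub => _ [x ->].
exact: colored_gen_by (seedsE x).
Qed.

(* Only #|E| = r(H) is used: neither the minimality of the seed set nor the
   Coxeter presentation of H plays a role in the equivalence. *)
Theorem lemma3p1 (D : diagram) (E : {set strand D}) (n : nat)
  (H : group) (I : finType) (m : I -> I -> nat) (s : I -> H)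
  (A : (H -> Prop) -> Prop) :
  generating_seeds E -> #|E| = n -> wirtinger_number D n ->
  coxeter_matrix m -> coxeter_system m s -> coxeter_rank s n ->
  robust s n A ->
  (exists g : strand D -> H, refl_coloring s g /\
      generates (fun h => exists x, h = g x))
  <->
  (exists R : H -> Prop, A R /\
     exists f : strand D -> H,
       [/\ forall e, e \in E -> R (f e),
           {in E &, injective f},
           forall h, R h -> exists2 e, e \in E & f e = h &
           exists g : strand D -> H, refl_coloring s g /\
             forall e, e \in E -> g e = f e]).
Proof.
move=> seedsE <- _ _ _ rankE [A_Gen A_robust]; split.
- case=> g [[g_refl g_cross] g_onto].
  have genE := seed_labels_generate seedsE g_cross g_onto.
  have g_inj := coxeter_rank_injective rankE (fun x _ => g_refl x) genE.
  have GenE : in_Gen s #|E| (set_image E g).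
    by split=> [_ [x _ ->]||] //; apply: has_card_set_image.
  have [R [AR [k Rk]]] := A_robust _ GenE.
  exists R; split=> //; exists (fun x => conjg k (g x)); split.
  + by move=> e eE; apply/Rk; exists (g e); split=> //; exists e.
  + by move=> x y xE yE /conjg_inj /g_inj; apply.
  + by move=> h /Rk [_ [[e eE ->] ->]]; exists e.
  + by exists (fun x => conjg k (g x)); split=> //; apply: conjg_coloring.
- case=> R [AR [f [_ _ f_onto [g [g_col g_f]]]]].
  exists g; split=> //; case: (A_Gen _ AR) => _ _ genR.
  apply: generates_sub genR => h /f_onto [e eE <-].
  by apply: gen_elt; exists e; rewrite g_f.
Qed.
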